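(* There is a unique algebra homomorphism $\psi:U^j\to U$ such that $\psi(\mathbf e_i)=f_i+f_{\bar i}$, $\psi(\mathbf f_i)=e_i+e_{\bar i}$ for $1\le i<n$; $\psi(\mathbf e_n)=2f_n$, $\psi(\mathbf f_n)=e_n$; $\psi(\mathbf d_i)=-h_i-h_{\bar i}$ for $1\le i\le n$; and $\psi(\mathbf d_{n+1})=-2h_{n+1}$.
   Context: Fix $n\ge1$. Let $\mathfrak g=\mathfrak{gl}_{2n+1}(\mathbb C)$ with matrix units $E_{a,b}$, $E_i=E_{i,i+1}$, $F_i=E_{i+1,i}$, $H_i=E_{i,i}$. Let $\theta(X)=JXJ^{-1}$ where $J$ is the antidiagonal permutation matrix (so $\theta(E_{a,b})=E_{2n+2-a,2n+2-b}$), $\mathfrak g^\theta$ its fixed-point Lie subalgebra and $U^j=U(\mathfrak g^\theta)$. Set $\mathbf e_i=E_i+F_{2n+1-i}$, $\mathbf f_i=F_i+E_{2n+1-i}$, $\mathbf d_i=H_i+H_{2n+2-i}$ ($1\le i\le n$), $\mathbf d_{n+1}=2H_{n+1}$; these generate $U^j$. Let $U=U(\mathfrak{gl}_{n+1}(\mathbb C)\oplus\mathfrak{gl}_n(\mathbb C))$, where $e_i=E_{i,i+1}$, $f_i=E_{i+1,i}$ ($1\le i\le n$), $h_i=E_{i,i}$ ($1\le i\le n+1$) are the Chevalley generators of $\mathfrak{gl}_{n+1}$, and $e_{\bar i}=E_{i,i+1},f_{\bar i}=E_{i+1,i}$ ($1\le i\le n-1$), $h_{\bar i}=E_{i,i}$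 ($1\le i\le n$) those of $\mathfrak{gl}_n$; elements of the two summands commute. *)

From HB Require Import structures.
From mathcomp Require Import all_boot all_order all_algebra.
Set Implicit Arguments. Unset Strict Implicit. Unset Printing Implicit Defensive.
Import Order.TTheory GRing.Theory Num.Theory.
Local Open Scope ring_scope.

Section Defs.
Variable F : fieldType.

Definition lie_hom_on (L : lmodType F) (br : L -> L -> L) (P : pred L)
    (A : algType F) (f : L -> A) : Prop :=
  (forall (a : F) (x y : L), x \in P -> y \in P -> f (a *: x + y) = a *: f x + f y) /\
  (forall x y : L, x \in P -> y \in P -> f (br x y) = f x * f y - f y * f x).

Definition is_UEA (L : lmodType F) (br : L -> L -> L) (P : pred L)
    (A : algType F) (iota : L -> A) : Prop :=
  lie_hom_on br P iota /\
  forall (B : algType F) (phi : L -> B), lie_hom_on br P phi ->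
    exists psi : {lrmorphism A -> B},
      (forall x, x \in P -> psi (iota x) = phi x) /\
      (forall psi' : {lrmorphism A -> B},
          (forall x, x \in P -> psi' (iota x) = phi x) -> psi' =1 psi).

(* matrix unit E_{a,b} with 1-based indices a, b *)
Definition Emx (k a b : nat) : 'M[F]_k :=
  \matrix_(i, j) (((i : nat) == a.-1) && ((j : nat) == b.-1))%:R.

Definition mxbr (k : nat) (X Y : 'M[F]_k) : 'M[F]_k := X *m Y - Y *m X.

Definition Jmx (n : nat) : 'M[F]_(n.*2.+1) :=
  \matrix_(i, j) ((i : nat) + j == n.*2)%:R.
Definition theta (n : nat) (X : 'M[F]_(n.*2.+1)) : 'M[F]_(n.*2.+1) :=
  Jmx n *m X *m invmx (Jmx n).
Definition gtheta (n : nat) : pred 'M[F]_(n.*2.+1) := [pred X | theta X == X].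

Definition be (n i : nat) : 'M[F]_(n.*2.+1) :=
  Emx _ i i.+1 + Emx _ (n.*2.+2 - i) (n.*2.+1 - i).
Definition bf (n i : nat) : 'M[F]_(n.*2.+1) :=
  Emx _ i.+1 i + Emx _ (n.*2.+1 - i) (n.*2.+2 - i).
Definition bd (n i : nat) : 'M[F]_(n.*2.+1) :=
  Emx _ i i + Emx _ (n.*2.+2 - i) (n.*2.+2 - i).
Definition bd_last (n : nat) : 'M[F]_(n.*2.+1) := Emx _ n.+1 n.+1 *+ 2.

(* gl_{n+1} (+) gl_n as pairs of matrices, componentwise bracket *)
Definition pbr (n : nat) (X Y : 'M[F]_n.+1 * 'M[F]_n) : 'M[F]_n.+1 * 'M[F]_n :=
  (mxbr X.1 Y.1, mxbr X.2 Y.2).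

Definition ce (n i : nat) : 'M[F]_n.+1 * 'M[F]_n := (Emx _ i i.+1, 0).
Definition cf (n i : nat) : 'M[F]_n.+1 * 'M[F]_n := (Emx _ i.+1 i, 0).
Definition ch (n i : nat) : 'M[F]_n.+1 * 'M[F]_n := (Emx _ i i, 0).
Definition ceb (n i : nat) : 'M[F]_n.+1 * 'M[F]_n := (0, Emx _ i i.+1).
Definition cfb (n i : nat) : 'M[F]_n.+1 * 'M[F]_n := (0, Emx _ i.+1 i).
Definition chb (n i : nat) : 'M[F]_n.+1 * 'M[F]_n := (0, Emx _ i i).

Definition psi_spec (n : nat) (Uj U : algType F)
    (iota : 'M[F]_(n.*2.+1) -> Uj) (jota : 'M[F]_n.+1 * 'M[F]_n -> U)
    (psi : Uj -> U) : Prop :=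
  (forall i, (1 <= i < n)%N ->
      psi (iota (be n i)) = jota (cf n i) + jota (cfb n i) /\
      psi (iota (bf n i)) = jota (ce n i) + jota (ceb n i)) /\
  psi (iota (be n n)) = jota (cf n n) *+ 2 /\
  psi (iota (bf n n)) = jota (ce n n) /\
  (forall i, (1 <= i <= n)%N ->
      psi (iota (bd n i)) = - jota (ch n i) - jota (chb n i)) /\
  psi (iota (bd_last n)) = - (jota (ch n n.+1) *+ 2).

End Defs.

From HB Require Import structures.
From mathcomp Require Import all_boot all_order all_algebra.
From mathcomp Require Import zify ring.
Import Order.TTheory GRing.Theory Num.Theory.
Set Implicit Arguments. Unset Strict Implicit. Unset Printing Implicit Defensive.
Local Open Scope ring_scope.

(* Since theta is conjugation by the involution J, a matrix lies in g^theta iff it is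
   centrosymmetric, i.e. commutes with J and so preserves the eigenspaces V+ (dimension
   n+1) and V- (dimension n) of J.  Restricting to V+ and V-, in the bases
   (-1)^b (e_b +- e_(2n-b)), and composing with the Chevalley involution X |-> -X^T
   gives a Lie algebra morphism g^theta -> gl_(n+1) + gl_n taking the generators to
   the prescribed values; the universal property of U^j then provides psi.
   For uniqueness, the symmetrised matrix units Y_(a,b) = E_(a,b) + theta E_(a,b)
   span g^theta, and [Y_(a,b-1), Y_(b-1,b)] equals Y_(a,b) up to units of smaller
   spread b - a, so g^theta is generated as a Lie algebra by the diagonal and
   superdiagonal units, which are the generators d_i, e_i and (via J) f_i. *)


Section LieHomOn.
Variables (F : fieldType) (L : lmodType F) (br : L -> L -> L) (P : pred L).

Section Linearity.
Variables (A : algType F) (f : L -> A).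
Hypothesis hf : lie_hom_on br P f.

Lemma lie_hom_onD x y : x \in P -> y \in P -> f (x + y) = f x + f y.
Proof. by move=> Px Py; have := hf.1 1 x y Px Py; rewrite !scale1r. Qed.

Hypothesis P0 : 0 \in P.

Lemma lie_hom_on0 : f 0 = 0.
Proof. by apply: (@addIr _ (f 0)); rewrite add0r -lie_hom_onD // addr0. Qed.

Lemma lie_hom_onZ c x : x \in P -> f (c *: x) = c *: f x.
Proof. by move=> Px; have := hf.1 c x 0 Px P0; rewrite !addr0 lie_hom_on0 addr0. Qed.

Lemma lie_hom_onN x : x \in P -> f (- x) = - f x.
Proof. by move=> Px; rewrite -scaleN1r lie_hom_onZ // scaleN1r. Qed.

End Linearity.

Lemma lrmorph_lie_hom_on (A B : algType F) (iota : L -> A) (psi : {lrmorphism A -> B}) :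
  lie_hom_on br P iota -> lie_hom_on br P (psi \o iota).
Proof.
move=> [iota_lin iota_br]; split=> [c x y Px Py|x y Px Py] /=.
  by rewrite iota_lin // linearP.
by rewrite iota_br // rmorphB !rmorphM.
Qed.

Lemma lie_hom_on_comp (L' : lmodType F) (br' : L' -> L' -> L') (A : algType F)
    (g : L -> L') (f : L' -> A) :
  (forall c x y, g (c *: x + y) = c *: g x + g y) ->
  {in P &, forall x y, g (br x y) = br' (g x) (g y)} ->
  lie_hom_on br' predT f -> lie_hom_on br P (f \o g).
Proof.
move=> g_lin g_br [f_lin f_br]; split=> [c x y Px Py|x y Px Py] /=.
  by rewrite g_lin f_lin.
by rewrite g_br // f_br.
Qed.

End LieHomOn.

Lemma inord_eq N x y : (x <= N)%N -> (y <= N)%N -> (@inord N x == inord y) = (x == y).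
Proof. by move=> hx hy; rewrite -(inj_eq val_inj) /= !inordK. Qed.

Lemma eq_inord N x (i : 'I_N.+1) : (x <= N)%N -> (i == inord x) = (i == x :> nat).
Proof. by move=> hx; rewrite -(inj_eq val_inj) /= inordK. Qed.

Lemma rev_inord N x : (x <= N)%N -> rev_ord (inord x : 'I_N.+1) = inord (N - x).
Proof. by move=> hx; apply: val_inj => /=; rewrite !inordK; lia. Qed.

Lemma inord_rev N (i : 'I_N.+1) : inord (N - i) = rev_ord i.
Proof. by apply: val_inj; have := ltn_ord i; rewrite /= inordK; lia. Qed.

Section CentrosymmetricMatrices.
Variables (F : fieldType) (n : nat).
Local Notation M := 'M[F]_(n.*2.+1).
Local Notation E a b := (delta_mx (inord a) (inord b) : M).

Definition centrosymmetric (X : M) := forall i j, X (rev_ord i) (rev_ord j) = X i j.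

(* 0-based indices: [symunit a b] is E_{a+1,b+1} + theta(E_{a+1,b+1}). *)
Definition symunit a b : M := E a b + E (n.*2 - a) (n.*2 - b).

Lemma mul_delta_inord a b c d : (b <= n.*2)%N -> (c <= n.*2)%N ->
  E a b *m E c d = E a d *+ (b == c).
Proof. by move=> hb hc; rewrite mul_delta_mx_cond inord_eq. Qed.

Lemma symunit_rev a b : (a <= n.*2)%N -> (b <= n.*2)%N ->
  symunit (n.*2 - a) (n.*2 - b) = symunit a b.
Proof. by move=> ha hb; rewrite /symunit !subKn // addrC. Qed.

Lemma mul_symunit a b c d : (a <= n.*2)%N -> (b <= n.*2)%N ->
    (c <= n.*2)%N -> (d <= n.*2)%N ->
  symunit a b *m symunit c d =
    symunit a d *+ (b == c) + symunit a (n.*2 - d) *+ (b == n.*2 - c)%N.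
Proof.
move=> ha hb hc hd; rewrite /symunit mulmxDl !mulmxDr !mul_delta_inord; try lia.
rewrite !subKn //.
have -> : (n.*2 - b == c)%N = (b == n.*2 - c)%N by apply/eqP/eqP; lia.
have -> : (n.*2 - b == n.*2 - c)%N = (b == c) by apply/eqP/eqP; lia.
by rewrite !mulrnDl [RHS]addrACA [in RHS](addrC (E (n.*2 - a) (n.*2 - d) *+ _)).
Qed.

Lemma mxbr_symunit_chain a b : (a < b.-1)%N -> (b <= n.*2)%N ->
  mxbr (symunit a b.-1) (symunit b.-1 b) =
    symunit a b + (symunit a (n.*2 - b) *+ (b.-1 == n.*2 - b.-1)%N
                   - symunit b.-1 (n.*2 - b.-1) *+ (b == n.*2 - a)%N).
Proof.
move=> hab hb; rewrite /mxbr !mul_symunit; try lia.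
rewrite eqxx (_ : (b == a)%N = false); last by apply/eqP; lia.
by rewrite mulr1n mulr0n add0r addrA.
Qed.

Lemma symunitE a b p q : (a <= n.*2)%N -> (b <= n.*2)%N ->
  symunit a b p q = ((p == a :> nat) && (q == b :> nat))%:R
                  + ((p == (n.*2 - a)%N :> nat) && (q == (n.*2 - b)%N :> nat))%:R.
Proof. by move=> ha hb; rewrite !mxE !eq_inord //; lia. Qed.

Lemma mulJmx (X : M) : Jmx F n *m X = \matrix_(i, j) X (rev_ord i) j.
Proof.
apply/matrixP => i j; have := ltn_ord i => hi.
rewrite !mxE (bigD1 (rev_ord i)) //= big1 ?addr0 => [|k hk].
  by rewrite mxE /= (_ : (i + (n.*2.+1 - i.+1) == n.*2)%N = true) ?mul1r //; lia.
rewrite mxE; case: eqP => h; last by rewrite mul0r.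
by case/eqP: hk; apply: val_inj => /=; lia.
Qed.

Lemma mulmxJ (X : M) : X *m Jmx F n = \matrix_(i, j) X i (rev_ord j).
Proof.
apply/matrixP => i j; have := ltn_ord j => hj.
rewrite !mxE (bigD1 (rev_ord j)) //= big1 ?addr0 => [|k hk].
  by rewrite mxE /= (_ : (n.*2.+1 - j.+1 + j == n.*2)%N = true) ?mulr1 //; lia.
rewrite mxE; case: eqP => h; last by rewrite mulr0.
by case/eqP: hk; apply: val_inj => /=; lia.
Qed.

Lemma invmx_Jmx : invmx (Jmx F n) = Jmx F n.
Proof.
have JJ : Jmx F n *m Jmx F n = 1%:M.
  rewrite mulJmx; apply/matrixP => i j; have := ltn_ord i; have := ltn_ord j.
  rewrite !mxE /= => hj hi.
  congr ((_ : bool)%:R); apply/idP/idP => /eqP h; apply/eqP.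
    by apply: val_inj => /=; lia.
  by rewrite h /=; lia.
have [uJ _] := mulmx1_unit JJ.
by rewrite -[LHS]mulmx1 -JJ mulmxA mulVmx // mul1mx.
Qed.

Lemma thetaE (X : M) : theta X = \matrix_(i, j) X (rev_ord i) (rev_ord j).
Proof. by rewrite /theta invmx_Jmx mulmxJ mulJmx; apply/matrixP => i j; rewrite !mxE. Qed.

Lemma gthetaP (X : M) : reflect (centrosymmetric X) (X \in @gtheta F n).
Proof.
rewrite inE thetaE; apply: (iffP eqP) => [h i j|h].
  by have /matrixP/(_ i j) := h; rewrite mxE.
by apply/matrixP => i j; rewrite mxE h.
Qed.

Lemma gtheta_submod_closed : submod_closed (@gtheta F n).
Proof.
split; first by apply/gthetaP => i j; rewrite !mxE.
by move=> c X Y /gthetaP hX /gthetaP hY; apply/gthetaP => i j; rewrite !mxE hX hY.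
Qed.

HB.instance Definition _ := GRing.isSubmodClosed.Build F M (@gtheta F n)
  (GRing.submod_closed_semi gtheta_submod_closed).

Lemma symunit_gtheta a b : (a <= n.*2)%N -> (b <= n.*2)%N -> symunit a b \in @gtheta F n.
Proof.
move=> ha hb; apply/gthetaP => i j; rewrite !symunitE //.
have hrev (x : 'I_n.*2.+1) y : (y <= n.*2)%N ->
    (rev_ord x == y :> nat) = (x == (n.*2 - y)%N :> nat).
  by move=> hy; have hx := ltn_ord x; apply/eqP/eqP => /=; lia.
by rewrite !hrev ?subKn ?leq_subr // addrC.
Qed.

End CentrosymmetricMatrices.

Lemma centrosymmetric_sum_symunit (F : fieldType) n (X : 'M[F]_(n.*2.+1)) :
  centrosymmetric X -> \sum_i \sum_j X i j *: symunit F n i j = X *+ 2.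
Proof.
move=> hX; have hE (i j : 'I_n.*2.+1) :
    symunit F n i j = delta_mx i j + delta_mx (rev_ord i) (rev_ord j).
  by rewrite /symunit !inord_rev !inord_val.
under eq_bigr do under eq_bigr do rewrite hE scalerDr.
under eq_bigr do rewrite big_split /=.
rewrite big_split /= mulr2n.
have -> : \sum_i \sum_j X i j *: delta_mx (rev_ord i) (rev_ord j) = X.
  rewrite [RHS]matrix_sum_delta (reindex_inj rev_ord_inj); apply: eq_bigr => i _.
  by rewrite (reindex_inj rev_ord_inj); apply: eq_bigr => j _; rewrite hX !rev_ordK.
by rewrite -matrix_sum_delta.
Qed.

Section Generation.
Variables (F : fieldType) (n : nat) (B : algType F) (f g : 'M[F]_(n.*2.+1) -> B).
Local Notation gth := (@gtheta F n).
Local Notation Y := (symunit F n).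
Hypotheses (hf : lie_hom_on (@mxbr F _) gth f) (hg : lie_hom_on (@mxbr F _) gth g).
Hypothesis diag_eq : forall a, (a <= n)%N -> f (Y a a) = g (Y a a).
Hypothesis superdiag_eq : forall a, (a < n.*2)%N -> f (Y a a.+1) = g (Y a a.+1).

Let gth0 : 0 \in gth := rpred0 _.

Lemma lie_hom_on_eq_mxbr X Z : X \in gth -> Z \in gth ->
  f X = g X -> f Z = g Z -> f (mxbr X Z) = g (mxbr X Z).
Proof. by move=> hX hZ eX eZ; rewrite hf.2 // hg.2 // eX eZ. Qed.

Lemma lie_hom_on_eq_symunit a b : (a <= n.*2)%N -> (b <= n.*2)%N -> f (Y a b) = g (Y a b).
Proof.
suff IH d : forall a b, (a <= n.*2)%N -> (b <= n.*2)%N -> (a - b + (b - a) <= d)%N ->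
    f (Y a b) = g (Y a b) by move=> ha hb; apply: (IH _ a b ha hb).
elim: d => [|d IH] {}a {}b ha hb hd.
  have -> : b = a by lia.
  case: (leqP a n) => han; first exact: diag_eq.
  by rewrite -symunit_rev //; apply: diag_eq; lia.
wlog hab : a b ha hb hd / (a < b)%N => [hwlog|].
  case: (ltngtP a b) => hab; first exact: hwlog.
    by rewrite -symunit_rev //; apply: hwlog; lia.
  by apply: IH => //; lia.
have [hlt|/eqP hd1] := boolP (b - a < d.+1)%N; first by apply: IH => //; lia.
have [-> | hab1] := eqVneq b a.+1; first by apply: superdiag_eq; lia.
have hY x y : (x <= n.*2)%N -> (y <= n.*2)%N -> Y x y \in gth := @symunit_gtheta F n x y.
have eMn x y (k : bool) : (x <= n.*2)%N -> (y <= n.*2)%N ->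
    (k -> (x - y + (y - x) <= d)%N) -> f (Y x y *+ k) = g (Y x y *+ k).
  case: k => hx hy hk; last by rewrite !mulr0n (lie_hom_on0 hf) ?(lie_hom_on0 hg).
  by rewrite !mulr1n; apply: IH => //; exact: hk.
have hab2 : (a < b.-1)%N by lia.
have e : f (mxbr (Y a b.-1) (Y b.-1 b)) = g (mxbr (Y a b.-1) (Y b.-1 b)).
  by apply: lie_hom_on_eq_mxbr; rewrite ?hY //; try apply: IH; lia.
rewrite mxbr_symunit_chain // in e; set C := (_ - _) in e.
have hC : C \in gth by rewrite rpredB ?rpredMn ?hY //; lia.
have eC : f C = g C.
  rewrite (lie_hom_onD hf) ?(lie_hom_onD hg) ?(lie_hom_onN hf) ?(lie_hom_onN hg)
    ?rpredN ?rpredMn ?hY ?eMn //; try lia; move=> /eqP; lia.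
by move: e; rewrite (lie_hom_onD hf) ?hY // (lie_hom_onD hg) ?hY // eC => /addIr.
Qed.

Lemma lie_hom_on_eq_gtheta : (2%:R : F) != 0 -> {in gth, f =1 g}.
Proof.
move=> two_neq0 X hX.
have agree_sum (I : finType) (x : I -> 'M[F]_(n.*2.+1)) :
    (forall i, x i \in gth /\ f (x i) = g (x i)) ->
    (\sum_i x i) \in gth /\ f (\sum_i x i) = g (\sum_i x i).
  move=> hx; apply: (big_ind (fun S => S \in gth /\ f S = g S)) => [|u v [hu eu] [hv ev]|i _].
  - by split; rewrite ?rpred0 // (lie_hom_on0 hf) ?(lie_hom_on0 hg).
  - by split; rewrite ?rpredD // (lie_hom_onD hf) // (lie_hom_onD hg) // eu ev.
  - exact: hx.
pose S := \sum_i \sum_j X i j *: Y i j.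
have [hS eS] : S \in gth /\ f S = g S.
  apply: (agree_sum) => i; apply: (agree_sum) => j.
  have hij : Y i j \in gth by apply: symunit_gtheta; rewrite -ltnS.
  split; first exact: rpredZ.
  by rewrite (lie_hom_onZ hf) // (lie_hom_onZ hg) // lie_hom_on_eq_symunit // -ltnS.
have -> : X = 2%:R^-1 *: S.
  rewrite /S centrosymmetric_sum_symunit; last exact/gthetaP.
  by rewrite -scaler_nat scalerA mulVf // scale1r.
by rewrite (lie_hom_onZ hf) // (lie_hom_onZ hg) // eS.
Qed.

End Generation.

Lemma sum_ord_delta (F : fieldType) N (h : nat -> F) m :
  \sum_(a < N) ((a : nat) == m)%:R * h a = if (m < N)%N then h m else 0.
Proof.
case: ltnP => hm.
  rewrite (bigD1 (Ordinal hm)) //= eqxx mul1r big1 ?addr0 // => a ha.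
  by rewrite (_ : (a == m :> nat) = false) ?mul0r //; apply: contraNF ha => /eqP am; apply/eqP/val_inj.
by apply: big1 => a _; rewrite (_ : (a == m :> nat) = false) ?mul0r //; apply/eqP; have := ltn_ord a; lia.
Qed.

Lemma mxbr_opp_trmx (F : fieldType) m (A B : 'M[F]_m) :
  mxbr (- A^T) (- B^T) = - (mxbr A B)^T.
Proof. by rewrite /mxbr !mulNmx !mulmxN !opprK linearB /= !trmx_mul opprB. Qed.

Lemma eqn_double_sub n x y : (x <= n)%N -> (y <= n)%N ->
  (x == n.*2 - y)%N = (x == y) && (y == n).
Proof. by move=> hx hy; apply/eqP/andP => [h | [/eqP -> /eqP ->]]; [split; apply/eqP | ]; lia. Qed.

Lemma eqn_double_sub2l n x y : (x <= n.*2)%N -> (y <= n.*2)%N ->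
  (n.*2 - x == n.*2 - y)%N = (x == y).
Proof. by move=> hx hy; apply/eqP/eqP; lia. Qed.

Section EigenspaceSplitting.
Variables (F : fieldType) (n : nat).
Local Notation M := 'M[F]_(n.*2.+1).
Local Notation sgn k := ((-1) ^+ k : F).

Definition halve_mid a : F := if a == n then 2%:R^-1 else 1.

(* The columns of [Qplus] (resp. [Qminus]) form the basis (-1)^b (e_b +- e_(2n-b))
   of the +1 (resp. -1) eigenspace of J; [Pplus], [Pminus] are left inverses on
   these eigenspaces.  The signs make [split_mx] hit the prescribed generators. *)
Definition Qplus : 'M[F]_(n.*2.+1, n.+1) :=
  \matrix_(k, b) (sgn b * (((k : nat) == b)%:R + ((k : nat) == (n.*2 - b)%N)%:R)).
Definition Pplus : 'M[F]_(n.+1, n.*2.+1) :=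
  \matrix_(a, k) (sgn a * halve_mid a * ((k : nat) == a)%:R).
Definition Qminus : 'M[F]_(n.*2.+1, n) :=
  \matrix_(k, b) (sgn b * (((k : nat) == b)%:R - ((k : nat) == (n.*2 - b)%N)%:R)).
Definition Pminus : 'M[F]_(n, n.*2.+1) :=
  \matrix_(a, k) (sgn a * ((k : nat) == a)%:R).

Definition restr_plus (X : M) := Pplus *m (X *m Qplus).
Definition restr_minus (X : M) := Pminus *m (X *m Qminus).

Definition split_mx (X : M) : 'M[F]_n.+1 * 'M[F]_n :=
  (- (restr_plus X)^T, - (restr_minus X)^T).

Lemma mulmx_Qplus (X : M) k b :
  (X *m Qplus) k b = sgn b * (X k (inord b) + X k (inord (n.*2 - b)%N)).
Proof.
rewrite mxE; under eq_bigr => l _ do rewrite mxE -[X k l](congr1 (X k) (inord_val l)).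
transitivity (\sum_(l < n.*2.+1) (((l : nat) == b)%:R * (sgn b * X k (inord l)) +
    ((l : nat) == (n.*2 - b)%N)%:R * (sgn b * X k (inord l)))).
  by apply: eq_bigr => l _; ring.
rewrite big_split /= !(@sum_ord_delta _ _ (fun x => sgn b * X k (inord x))).
by have hb := ltn_ord b; rewrite !ifT; [ring | lia | lia].
Qed.

Lemma mulmx_Qminus (X : M) k b :
  (X *m Qminus) k b = sgn b * (X k (inord b) - X k (inord (n.*2 - b)%N)).
Proof.
rewrite mxE; under eq_bigr => l _ do rewrite mxE -[X k l](congr1 (X k) (inord_val l)).
transitivity (\sum_(l < n.*2.+1) (((l : nat) == b)%:R * (sgn b * X k (inord l)) +
    ((l : nat) == (n.*2 - b)%N)%:R * (- (sgn b * X k (inord l))))).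
  by apply: eq_bigr => l _; ring.
rewrite big_split /= (@sum_ord_delta _ _ (fun x => sgn b * X k (inord x))).
rewrite (@sum_ord_delta _ _ (fun x => - (sgn b * X k (inord x)))).
by have hb := ltn_ord b; rewrite !ifT; [ring | lia | lia].
Qed.

Lemma mul_Pplus m (Z : 'M[F]_(n.*2.+1, m)) a j :
  (Pplus *m Z) a j = sgn a * halve_mid a * Z (inord a) j.
Proof.
rewrite mxE; under eq_bigr => l _ do rewrite mxE -[Z l j](congr1 (Z^~ j) (inord_val l)).
transitivity (\sum_(l < n.*2.+1) (((l : nat) == a)%:R * (sgn a * halve_mid a * Z (inord l) j))).
  by apply: eq_bigr => l _; ring.
by rewrite (@sum_ord_delta _ _ (fun x => sgn a * halve_mid a * Z (inord x) j)) ifT //; have := ltn_ord a; lia.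
Qed.

Lemma mul_Pminus m (Z : 'M[F]_(n.*2.+1, m)) a j :
  (Pminus *m Z) a j = sgn a * Z (inord a) j.
Proof.
rewrite mxE; under eq_bigr => l _ do rewrite mxE -[Z l j](congr1 (Z^~ j) (inord_val l)).
transitivity (\sum_(l < n.*2.+1) (((l : nat) == a)%:R * (sgn a * Z (inord l) j))).
  by apply: eq_bigr => l _; ring.
by rewrite (@sum_ord_delta _ _ (fun x => sgn a * Z (inord x) j)) ifT //; have := ltn_ord a; lia.
Qed.

Lemma centrosymmetric_mulmx_Qplus (W : M) : centrosymmetric W ->
  forall k j, (W *m Qplus) (rev_ord k) j = (W *m Qplus) k j.
Proof.
move=> hW k j; rewrite !mulmx_Qplus; have hj := ltn_ord j.
rewrite -{1}(hW k (inord j)) -{1}(hW k (inord (n.*2 - j))) !rev_inord ?subKn; try lia.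
by rewrite addrC.
Qed.

Lemma centrosymmetric_mulmx_Qminus (W : M) : centrosymmetric W ->
  forall k j, (W *m Qminus) (rev_ord k) j = - (W *m Qminus) k j.
Proof.
move=> hW k j; rewrite !mulmx_Qminus; have hj := ltn_ord j.
rewrite -{1}(hW k (inord j)) -{1}(hW k (inord (n.*2 - j))) !rev_inord ?subKn; try lia.
ring.
Qed.

Lemma split_mx_linear c (X W : M) : split_mx (c *: X + W) = c *: split_mx X + split_mx W.
Proof.
rewrite /split_mx /restr_plus /restr_minus !(mulmxDl, mulmxDr) -!scalemxAl -!scalemxAr.
by rewrite !linearD !linearZ.
Qed.

(* For [a = n] or [b = n] the right-hand side is 0: [Emx F n] is zero when an index exceeds [n]. *)
Lemma split_mx_symunit2 a b : (a <= n)%N -> (b <= n)%N ->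
  (split_mx (symunit F n a b)).2 = - sgn (a + b) *: Emx F n b.+1 a.+1.
Proof.
move=> ha hb; apply/matrixP => p q; have hp := ltn_ord p; have hq := ltn_ord q.
have oppT m (A : 'M[F]_m) i j : (- A^T) i j = - A j i by rewrite !mxE.
rewrite /split_mx oppT /restr_minus mul_Pminus mulmx_Qminus !symunitE ?inordK; try lia.
rewrite [in RHS]mxE [in RHS]mxE /= eqn_double_sub2l ?[(n.*2 - p == b)%N]eq_sym; try lia.
rewrite !eqn_double_sub ?[(b == p)%N]eq_sym; try lia.
have [qa | qa] := eqVneq (q : nat) a; last by rewrite ?andbF /=; ring.
have [pb | pb] := eqVneq (p : nat) b; last by rewrite ?andbF /=; ring.
rewrite qa pb exprD (_ : (a == n) = false) 1?(_ : (b == n) = false) /=.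
- by ring.
all: by apply: negbTE; apply/eqP; lia.
Qed.

Hypothesis two_neq0 : (2%:R : F) != 0.

Lemma Qplus_Pplus_id m (Z : 'M[F]_(n.*2.+1, m)) :
  (forall k j, Z (rev_ord k) j = Z k j) -> Qplus *m (Pplus *m Z) = Z.
Proof.
move=> hZ; apply/matrixP => k j; rewrite mxE; have hk := ltn_ord k.
transitivity (\sum_(a < n.+1) (((a : nat) == k)%:R * (halve_mid a * Z (inord a) j) +
    ((a : nat) == (n.*2 - k)%N)%:R * (halve_mid a * Z (inord a) j))).
  apply: eq_bigr => a _; rewrite mxE mul_Pplus; have ha := ltn_ord a.
  rewrite [(k : nat) == a]eq_sym.
  have -> : ((k : nat) == (n.*2 - a)%N) = ((a : nat) == (n.*2 - k)%N) by apply/eqP/eqP; lia.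
  transitivity (sgn a * sgn a * (((a : nat) == k)%:R * (halve_mid a * Z (inord a) j) +
    ((a : nat) == (n.*2 - k)%N)%:R * (halve_mid a * Z (inord a) j))); first ring.
  by rewrite -expr2 sqrr_sign mul1r.
rewrite big_split /= !(@sum_ord_delta _ _ (fun x => halve_mid x * Z (inord x) j)) /halve_mid.
case: (ltngtP k n) => hkn.
- rewrite (_ : (k < n.+1)%N) 1?(_ : (n.*2 - k < n.+1)%N = false) ?inord_val ?mul1r ?addr0 //; lia.
- rewrite (_ : (k < n.+1)%N = false) 1?(_ : (n.*2 - k < n.+1)%N); try lia.
  rewrite inord_rev (hZ k j) (_ : ((n.*2 - k)%N == n) = false) ?mul1r ?add0r //.
  by apply: negbTE; apply/eqP; lia.
- have hk2 : (n.*2 - k = k)%N by lia.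
  have hk1 : (k < n.+1)%N by lia.
  by rewrite hk2 hk1 inord_val hkn eqxx; field.
Qed.

Lemma Qminus_Pminus_id m (Z : 'M[F]_(n.*2.+1, m)) :
  (forall k j, Z (rev_ord k) j = - Z k j) -> Qminus *m (Pminus *m Z) = Z.
Proof.
move=> hZ; apply/matrixP => k j; rewrite mxE; have hk := ltn_ord k.
transitivity (\sum_(a < n) (((a : nat) == k)%:R * Z (inord a) j +
    ((a : nat) == (n.*2 - k)%N)%:R * (- Z (inord a) j))).
  apply: eq_bigr => a _; rewrite mxE mul_Pminus; have ha := ltn_ord a.
  rewrite [(k : nat) == a]eq_sym.
  have -> : ((k : nat) == (n.*2 - a)%N) = ((a : nat) == (n.*2 - k)%N) by apply/eqP/eqP; lia.
  transitivity (sgn a * sgn a * (((a : nat) == k)%:R * Z (inord a) j +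
    ((a : nat) == (n.*2 - k)%N)%:R * (- Z (inord a) j))); first ring.
  by rewrite -expr2 sqrr_sign mul1r.
rewrite big_split /= (@sum_ord_delta _ _ (fun x => Z (inord x) j)).
rewrite (@sum_ord_delta _ _ (fun x => - Z (inord x) j)).
case: (ltngtP k n) => hkn.
- by rewrite (_ : (n.*2 - k < n)%N = false) ?inord_val ?addr0 //; lia.
- rewrite (_ : (n.*2 - k < n)%N); last lia.
  by rewrite inord_rev (hZ k j) opprK add0r.
- have hk1 : (n.*2 - k < n)%N = false by lia.
  have /eqP : Z k j = - Z k j by rewrite -{1}(hZ k j); congr (Z _ j); apply: val_inj => /=; lia.
  rewrite -subr_eq0 opprK -mulr2n -mulr_natl mulf_eq0 (negbTE two_neq0) /= => /eqP ->.
  by rewrite hk1 addr0.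
Qed.

Lemma restr_plus_mul (X W : M) : centrosymmetric W ->
  restr_plus (X *m W) = restr_plus X *m restr_plus W.
Proof.
move=> hW; rewrite /restr_plus -[X *m W *m _]mulmxA.
by rewrite -{1}(Qplus_Pplus_id (centrosymmetric_mulmx_Qplus hW)) !mulmxA.
Qed.

Lemma restr_minus_mul (X W : M) : centrosymmetric W ->
  restr_minus (X *m W) = restr_minus X *m restr_minus W.
Proof.
move=> hW; rewrite /restr_minus -[X *m W *m _]mulmxA.
by rewrite -{1}(Qminus_Pminus_id (centrosymmetric_mulmx_Qminus hW)) !mulmxA.
Qed.

Lemma split_mx_mxbr (X W : M) : centrosymmetric X -> centrosymmetric W ->
  split_mx (mxbr X W) = pbr (split_mx X) (split_mx W).
Proof.
move=> hX hW; rewrite /split_mx /pbr /= !mxbr_opp_trmx /mxbr.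
rewrite -!restr_plus_mul // -!restr_minus_mul //.
by rewrite /restr_plus /restr_minus !(mulmxBl, mulmxBr).
Qed.

Lemma split_mx_symunit1 a b : (a <= n)%N -> (b <= n)%N ->
  (split_mx (symunit F n a b)).1 =
    - (sgn (a + b) * (1 + (b == n)%:R)) *: Emx F n.+1 b.+1 a.+1.
Proof.
move=> ha hb; apply/matrixP => p q; have hp := ltn_ord p; have hq := ltn_ord q.
have oppT m (A : 'M[F]_m) i j : (- A^T) i j = - A j i by rewrite !mxE.
rewrite /split_mx oppT /restr_plus mul_Pplus mulmx_Qplus !symunitE ?inordK; try lia.
rewrite [in RHS]mxE [in RHS]mxE /= eqn_double_sub2l ?[(n.*2 - p == b)%N]eq_sym; try lia.
rewrite !eqn_double_sub ?[(b == p)%N]eq_sym; try lia.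
have [-> | qa] := eqVneq (q : nat) a; last by rewrite ?andbF /=; ring.
have [-> | pb] := eqVneq (p : nat) b; last by rewrite ?andbF /=; ring.
rewrite /halve_mid exprD /=.
by case: (a == n); case: (b == n); rewrite /=; field.
Qed.

End EigenspaceSplitting.

Lemma Emx_delta (F : fieldType) N p q : (0 < p <= N.+1)%N -> (0 < q <= N.+1)%N ->
  Emx F N.+1 p q = delta_mx (inord p.-1) (inord q.-1).
Proof. by move=> hp hq; apply/matrixP => i j; rewrite !mxE !eq_inord //; lia. Qed.

Lemma Emx_out (F : fieldType) k a b : (k < a)%N || (k < b)%N -> Emx F k a b = 0.
Proof.
move=> hab; apply/matrixP => i j; rewrite !mxE; have hi := ltn_ord i; have hj := ltn_ord j.
case: eqP => [ia|_] //; case: eqP => [jb|_] //; lia.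
Qed.

Lemma sign_odd_add (F : fieldType) i : (0 < i)%N -> (-1) ^+ (i.-1 + i) = - 1 :> F.
Proof. by case: i => // i _; rewrite -signr_odd addnS /= oddD addbb. Qed.

Lemma sign_double (F : fieldType) a : (-1) ^+ (a + a) = 1 :> F.
Proof. by rewrite exprD -expr2 sqrr_sign. Qed.

Lemma be_symunit (F : fieldType) n i : (1 <= i <= n)%N -> be F n i = symunit F n i.-1 i.
Proof.
move=> hi; rewrite /be /symunit !Emx_delta /=; [|lia..].
by congr (_ + delta_mx (inord _) (inord _)); lia.
Qed.

Lemma bf_symunit (F : fieldType) n i : (1 <= i <= n)%N -> bf F n i = symunit F n i i.-1.
Proof.
move=> hi; rewrite /bf /symunit !Emx_delta /=; [|lia..].
by congr (_ + delta_mx (inord _) (inord _)); lia.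
Qed.

Lemma bd_symunit (F : fieldType) n i : (1 <= i <= n)%N -> bd F n i = symunit F n i.-1 i.-1.
Proof.
move=> hi; rewrite /bd /symunit !Emx_delta /=; [|lia..].
by congr (_ + delta_mx (inord _) (inord _)); lia.
Qed.

Lemma bd_last_symunit (F : fieldType) n : bd_last F n = symunit F n n n.
Proof.
rewrite /bd_last /symunit Emx_delta /=; [|lia..].
by have -> : (n.*2 - n = n)%N by lia.
Qed.

Lemma pairD (V W : zmodType) (x1 x2 : V) (y1 y2 : W) : (x1, y1) + (x2, y2) = (x1 + x2, y1 + y2).
Proof. by []. Qed.

Lemma pairN (V W : zmodType) (x : V) (y : W) : - (x, y) = (- x, - y).
Proof. by []. Qed.

Section GeneratorImages.
Variables (F : fieldType) (n : nat).
Hypothesis two_neq0 : (2%:R : F) != 0.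

Lemma split_mx_be i : (1 <= i < n)%N -> split_mx (be F n i) = cf F n i + cfb F n i.
Proof.
move=> hi; rewrite be_symunit; last lia.
rewrite [LHS]surjective_pairing (split_mx_symunit1 two_neq0) ?split_mx_symunit2; [|lia..].
have hin : (i == n) = false by apply: negbTE; apply/eqP; lia.
rewrite sign_odd_add ?prednK ?hin; [|lia..].
by rewrite /cf /cfb pairD !addr0 add0r mulN1r !opprK !scale1r.
Qed.

Lemma split_mx_bf i : (1 <= i < n)%N -> split_mx (bf F n i) = ce F n i + ceb F n i.
Proof.
move=> hi; rewrite bf_symunit; last lia.
rewrite [LHS]surjective_pairing (split_mx_symunit1 two_neq0) ?split_mx_symunit2; [|lia..].
have hin : (i.-1 == n) = false by apply: negbTE; apply/eqP; lia.
rewrite addnC sign_odd_add ?prednK ?hin; [|lia..].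
by rewrite /ce /ceb pairD !addr0 add0r mulN1r !opprK !scale1r.
Qed.

Lemma split_mx_be_n : (0 < n)%N -> split_mx (be F n n) = cf F n n *+ 2.
Proof.
move=> hn; rewrite be_symunit; last lia.
rewrite [LHS]surjective_pairing (split_mx_symunit1 two_neq0) ?split_mx_symunit2; [|lia..].
rewrite sign_odd_add ?prednK ?eqxx ?(@Emx_out F n n.+1) ?scaler0; [|lia..].
by rewrite /cf mulr2n pairD addr0 mulN1r opprK scalerDl scale1r.
Qed.

Lemma split_mx_bf_n : (0 < n)%N -> split_mx (bf F n n) = ce F n n.
Proof.
move=> hn; rewrite bf_symunit; last lia.
rewrite [LHS]surjective_pairing (split_mx_symunit1 two_neq0) ?split_mx_symunit2; [|lia..].
have hn1 : (n.-1 == n) = false by apply: negbTE; apply/eqP; lia.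
rewrite addnC sign_odd_add ?prednK ?hn1 ?(@Emx_out F n _ n.+1) ?scaler0; [|lia..].
by rewrite addr0 mulN1r opprK scale1r.
Qed.

Lemma split_mx_bd i : (1 <= i <= n)%N -> split_mx (bd F n i) = - ch F n i - chb F n i.
Proof.
move=> hi; rewrite bd_symunit; last lia.
rewrite [LHS]surjective_pairing (split_mx_symunit1 two_neq0) ?split_mx_symunit2; [|lia..].
have hin : (i.-1 == n) = false by apply: negbTE; apply/eqP; lia.
rewrite sign_double ?prednK ?hin; [|lia..].
by rewrite addr0 mul1r !scaleN1r /ch /chb !pairN pairD !oppr0 addr0 add0r.
Qed.

Lemma split_mx_bd_last : split_mx (bd_last F n) = - (ch F n n.+1 *+ 2).
Proof.
rewrite bd_last_symunit [LHS]surjective_pairing (split_mx_symunit1 two_neq0) ?split_mx_symunit2 //.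
rewrite sign_double eqxx (@Emx_out F n n.+1) ?scaler0 ?ltnSn // mul1r scaleNr scalerDl scale1r.
by rewrite /ch mulr2n pairD pairN addr0 oppr0.
Qed.

End GeneratorImages.

Lemma be_gtheta (F : fieldType) n i : (1 <= i <= n)%N -> be F n i \in @gtheta F n.
Proof. by move=> hi; rewrite be_symunit // symunit_gtheta //; lia. Qed.

Lemma bf_gtheta (F : fieldType) n i : (1 <= i <= n)%N -> bf F n i \in @gtheta F n.
Proof. by move=> hi; rewrite bf_symunit // symunit_gtheta //; lia. Qed.

Lemma bd_gtheta (F : fieldType) n i : (1 <= i <= n)%N -> bd F n i \in @gtheta F n.
Proof. by move=> hi; rewrite bd_symunit // symunit_gtheta //; lia. Qed.

Lemma bd_last_gtheta (F : fieldType) n : bd_last F n \in @gtheta F n.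
Proof. by rewrite bd_last_symunit symunit_gtheta //; lia. Qed.

Section PrescribedValues.
Variables (F : fieldType) (n : nat) (Uj U : algType F).
Variables (iota : 'M[F]_(n.*2.+1) -> Uj) (jota : 'M[F]_n.+1 * 'M[F]_n -> U).
Hypothesis n_gt0 : (0 < n)%N.

Lemma psi_spec_split (psi : Uj -> U) : (2%:R : F) != 0 ->
  lie_hom_on (@pbr F n) predT jota ->
  {in @gtheta F n, forall X, psi (iota X) = jota (split_mx X)} ->
  psi_spec iota jota psi.
Proof.
move=> two_neq0 hj hpsi.
have jD (x y : 'M[F]_n.+1 * 'M[F]_n) : jota (x + y) = jota x + jota y.
  by rewrite (lie_hom_onD hj).
have jN (x : 'M[F]_n.+1 * 'M[F]_n) : jota (- x) = - jota x by rewrite (lie_hom_onN hj).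
have jMn (x : 'M[F]_n.+1 * 'M[F]_n) k : jota (x *+ k) = jota x *+ k.
  by rewrite -!scaler_nat (lie_hom_onZ hj).
split; [move=> i hi; split | split; [|split; [|split; [move=> i hi|]]]].
- by rewrite hpsi ?be_gtheta ?split_mx_be ?jD //; lia.
- by rewrite hpsi ?bf_gtheta ?split_mx_bf ?jD //; lia.
- by rewrite hpsi ?be_gtheta ?split_mx_be_n ?jMn //; lia.
- by rewrite hpsi ?bf_gtheta ?split_mx_bf_n //; lia.
- by rewrite hpsi ?bd_gtheta ?split_mx_bd ?jD ?jN //; lia.
- by rewrite hpsi ?bd_last_gtheta ?split_mx_bd_last ?jN ?jMn.
Qed.

Variables (psi1 psi2 : Uj -> U).
Hypotheses (spec1 : psi_spec iota jota psi1) (spec2 : psi_spec iota jota psi2).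

Lemma psi_spec_eq_diag a : (a <= n)%N ->
  psi1 (iota (symunit F n a a)) = psi2 (iota (symunit F n a a)).
Proof.
move: spec1 spec2 => [_ [_ [_ [s1d s1l]]]] [_ [_ [_ [s2d s2l]]]] ha.
have [han | hna] := ltnP a n.
  by rewrite -[a]/(a.+1.-1) -bd_symunit ?s1d ?s2d //; lia.
have -> : a = n by lia.
by rewrite -bd_last_symunit s1l s2l.
Qed.

Lemma psi_spec_eq_superdiag a : (a < n.*2)%N ->
  psi1 (iota (symunit F n a a.+1)) = psi2 (iota (symunit F n a a.+1)).
Proof.
move: spec1 spec2 => [s1 [s1e [s1f _]]] [s2 [s2e [s2f _]]] ha.
have [han | hna] := ltnP a n.
  rewrite -[a]/(a.+1.-1) -be_symunit; last lia.
  have [hlt | hna1] := ltnP a.+1 n; first by rewrite (s1 _ _).1 ?(s2 _ _).1 //; lia.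
  have -> : a.+1 = n by lia.
  by rewrite s1e s2e.
rewrite -symunit_rev; [|lia..].
rewrite (_ : (n.*2 - a.+1 = (n.*2 - a).-1)%N) -?bf_symunit; [|lia..].
have [hlt | hna2] := ltnP (n.*2 - a) n; first by rewrite (s1 _ _).2 ?(s2 _ _).2 //; lia.
have -> : (n.*2 - a = n)%N by lia.
by rewrite s1f s2f.
Qed.

End PrescribedValues.

Unset Implicit Arguments.

Theorem lemma2 (F : numClosedFieldType) (n : nat) (hn : (0 < n)%N)
    (Uj : algType F) (iota : 'M[F]_(n.*2.+1) -> Uj)
    (HUj : is_UEA (@mxbr F _) (@gtheta F n) iota)
    (U : algType F) (jota : 'M[F]_n.+1 * 'M[F]_n -> U)
    (HU : is_UEA (@pbr F n) predT jota) :
  exists psi : {lrmorphism Uj -> U},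
    @psi_spec F n Uj U iota jota psi /\
    (forall psi' : {lrmorphism Uj -> U}, @psi_spec F n Uj U iota jota psi' -> psi' =1 psi).
Proof.
have two_neq0 : (2%:R : F) != 0 by rewrite pnatr_eq0.
have hphi : lie_hom_on (@mxbr F _) (@gtheta F n) (jota \o @split_mx F n).
  apply: lie_hom_on_comp HU.1 => [c X W|X W /gthetaP hX /gthetaP hW].
    exact: split_mx_linear.
  exact: split_mx_mxbr.
have [psi [hpsi psi_uniq]] := HUj.2 U _ hphi.
have spec := psi_spec_split hn two_neq0 HU.1 hpsi.
exists psi; split => // psi' spec'.
apply: psi_uniq => X hX; rewrite -hpsi //.
apply: (lie_hom_on_eq_gtheta (lrmorph_lie_hom_on psi' HUj.1) (lrmorph_lie_hom_on psi HUj.1))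
  => // a ha.
  exact: (psi_spec_eq_diag hn spec' spec).
exact: (psi_spec_eq_superdiag hn spec' spec).
Qed.
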